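(* Let $p$ be a prime and let $m$ be an integer. Let $G$ be a vector space over the field $\mathbb{F}_p$ of dimension $d \geq 3$, and let $S$ be a subset of $G$ such that $|S \cap H| \geq mp^{d-2}$ for each vector hyperplane $H$ (that is, each linear subspace of dimension $d - 1$) of $G$. Then $|S| \geq mp^{d-1}$. *)

From mathcomp Require Import all_boot all_order all_algebra.
Set Implicit Arguments. Unset Strict Implicit. Unset Printing Implicit Defensive.
Import Order.TTheory GRing.Theory Num.Theory.

From HB Require Import structures.
From mathcomp Require Import all_boot all_order all_algebra finfield zify.
Import Order.TTheory GRing.Theory Num.Theory.

Set Implicit Arguments.
Unset Strict Implicit.
Unset Printing Implicit Defensive.
Local Open Scope ring_scope.

(* Hyperplanes are the kernels of the nonzero linear forms c. Counting the pairs
   (x, c) with x in T and c x = 0 shows: if all but fewer than p^(d-1) forms cut T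
   in more than k points, then |T| > p k. With k = m p^(d-2) this settles the case
   where every hyperplane meets S in more than m p^(d-2) points. Otherwise some
   hyperplane H0 = ker c0 meets S in T = S ∩ H0 with |T| <= m p^(d-2). The same
   count inside H0, with the forms c outside the line spanned by c0, shows that
   some codimension-2 subspace K = H0 ∩ ker c has |T ∩ K| <= m p^(d-3). The p + 1
   hyperplanes through K contain every point outside K once and every point of K
   p + 1 times, so |S| + p |S ∩ K| >= (p + 1) m p^(d-2), i.e. |S| >= m p^(d-1). *)

Lemma mx11_eq0 (K : nzRingType) (A : 'M[K]_1) : (A == 0) = (A 0 0 == 0).
Proof.
by apply/eqP/eqP => [->|A00]; [rewrite mxE | apply/matrixP => i j; rewrite !ord1 mxE].
Qed.

Lemma dim_lker_form (K : fieldType) (U : vectType K) (f : 'Hom(U, 'M[K]_1)) u :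
  f u != 0 -> \dim (lker f) = (dim U).-1.
Proof.
move=> fu_neq0; have := limg_ker_dim f fullv; rewrite capfv dimvf.
suff -> : \dim (limg f) = 1%N by move=> <-; rewrite addn1.
apply/eqP; rewrite eqn_leq; apply/andP; split.
  by apply: leq_trans (dimvS (subvf _)) _; rewrite dimvf.
rewrite lt0n dimv_eq0; apply: contra fu_neq0 => /eqP img0.
by rewrite -memv0 -img0 memv_img ?memvf.
Qed.

Lemma double_count (A B : finType) (T : {set A}) (r : A -> B -> bool) :
  (\sum_(b : B) #|[set a in T | r a b]| = \sum_(a in T) #|[set b | r a b]|)%N.
Proof.
under eq_bigr do rewrite -sum1dep_card.
rewrite (exchange_big_dep (mem T)) /= => [|b a _ /andP[] //].
by apply: eq_bigr => a aT; rewrite -sum1dep_card aT.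
Qed.

Lemma card_set_in_sum (A : finType) (T : {set A}) (P : pred A) :
  #|[set a in T | P a]| = (\sum_(a in T) P a)%N.
Proof. by rewrite -sum1dep_card big_mkcondr; apply: eq_bigr => a _; case: (P a). Qed.

Lemma ltn_of_double_count (p M q k e t : nat) :
  (1 < p)%N -> (q < M)%N -> (e <= 1)%N ->
  (q * (e + t) + (p * M - q) * k.+1 <= e * (p * M) + t * M)%N -> (p * k < e + t)%N.
Proof.
(* If e + t <= p k, the hypothesis forces M + (p - 1) q k <= q (k + 1). *)
move=> p_gt1 qM e_le1 count; rewrite ltnNge; apply/negP => small.
have := leq_mul small (leqnn (M - q)).
have := leq_mul e_le1 (leqnn (p * M - M)).
have := leq_mul p_gt1 (leqnn (q * k)).
have : (M <= p * M)%N by nia.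
nia.
Qed.

Lemma card_affine_roots (K : finFieldType) (u v : K) :
  (#|[set a : K | (u + a * v == 0)%R]| + (v == 0)%R)%N =
  (1 + #|K| * ((v == 0) && (u == 0))%R)%N.
Proof.
have [-> | v_neq0] := eqVneq v 0.
  have -> : [set a : K | u + a * 0 == 0] = if u == 0 then setT else set0.
    by apply/setP => a; rewrite inE mulr0 addr0; case: (u == 0); rewrite inE.
  by case: (u == 0); rewrite ?cardsT ?cards0 /= ?muln1 ?muln0 addnC.
rewrite (@eq_card _ _ (pred1 (- u / v))) ?card1 ?muln0 // => a.
rewrite !inE addr_eq0; apply/eqP/eqP => [->|->].
  by rewrite opprK mulfK.
by rewrite divfK // opprK.
Qed.

(* The form of a column vector c is x |-> x *m c, so kerv c is a hyperplane when
   c != 0 and the whole space when c = 0. The definition is locked: unification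
   that unfolds it stalls on the arithmetic of 'F_p. *)
HB.lock Definition kerv (p d : nat) (c : 'cV['F_p]_d) : {vspace 'rV['F_p]_d} :=
  lker (linfun (mulmxr c) : 'Hom('rV['F_p]_d, 'M['F_p]_1)).
Arguments kerv {p d}.

Local Notation sect T c := [set x in T | x \in kerv c].

Section Hyperplanes.

Variables (p d : nat).
Hypothesis p_pr : prime p.
Local Notation F := 'F_p.

Lemma mem_kerv (x : 'rV[F]_d) (c : 'cV[F]_d) : (x \in kerv c) = ((x *m c) 0 0 == 0).
Proof. by rewrite kerv.unlock memv_ker lfunE mx11_eq0. Qed.

Lemma dim_kerv (c : 'cV[F]_d) : c != 0 -> \dim (kerv c) = d.-1.
Proof.
move=> c_neq0; have /cV0Pn[i ci_neq0] := c_neq0.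
rewrite kerv.unlock (@dim_lker_form _ _ _ (delta_mx 0 i)) /dim /= ?mul1n //.
by rewrite (lfunE (mulmxr c)) /= -rowE mx11_eq0 mxE.
Qed.

Lemma card_annihilators (x : 'rV[F]_d) :
  x != 0 -> #|[set c : 'cV[F]_d | x \in kerv c]| = (p ^ d.-1)%N.
Proof.
move=> /rV0Pn[i xi_neq0].
pose f : 'Hom('cV[F]_d, 'M[F]_1) := linfun (mulmx x).
have -> : [set c | x \in kerv c] = [set c in lker f].
  by apply/setP => c; rewrite !inE mem_kerv memv_ker lfunE mx11_eq0.
rewrite cardsE card_vspace card_Fp // (@dim_lker_form _ _ _ (delta_mx i 0)) /dim /= ?muln1 //.
by rewrite lfunE /= -colE mx11_eq0 mxE.
Qed.

Lemma sum_card_sections (T : {set 'rV[F]_d}) :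
  (\sum_(c : 'cV[F]_d) #|sect T c| = (0%R \in T) * p ^ d + #|T :\ 0%R| * p ^ d.-1)%N.
Proof.
rewrite (double_count T (fun x c => x \in kerv c)).
have card_all : #|[set c : 'cV[F]_d | (0 : 'rV_d) \in kerv c]| = (p ^ d)%N.
  rewrite (eq_card (B := predT)) => [|c]; last by rewrite !inE mem_kerv mul0mx mxE eqxx.
  by rewrite card_mx card_Fp // muln1.
have card_nz x : x \in T :\ 0 -> #|[set c | x \in kerv c]| = (p ^ d.-1)%N.
  by rewrite !inE => /andP[x_neq0 _]; apply: card_annihilators.
case: (boolP (0 \in T)) => [T0|T0].
  by rewrite (big_setD1 _ T0) /= card_all mul1n -sum_nat_const (eq_bigr _ card_nz).
rewrite -sum_nat_const -(eq_bigr _ card_nz); apply: eq_bigl => x.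
by rewrite !inE; case: eqP => // ->; rewrite (negbTE T0).
Qed.

Lemma mem_kerv_pencil (x : 'rV[F]_d) (c0 c : 'cV[F]_d) (a : F) :
  (x \in kerv (c + a *: c0)) = ((x *m c) 0 0 + a * (x *m c0) 0 0 == 0).
Proof. by rewrite mem_kerv mulmxDr -(scalemxAr a x c0) !mxE. Qed.

Lemma card_pencil (S : {set 'rV[F]_d}) (c0 c : 'cV[F]_d) :
  (\sum_(a : F) #|sect S (c + a *: c0)| + #|sect S c0| =
   #|S| + p * #|sect (sect S c0) c|)%N.
Proof.
have -> : sect (sect S c0) c = [set x in S | (x \in kerv c0) && (x \in kerv c)].
  by apply/setP => x; rewrite !inE andbA.
rewrite double_count !card_set_in_sum -big_split -sum1_card big_distrr -big_split /=.
apply: eq_bigr => x _.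
have -> : #|[set a : F | x \in kerv (c + a *: c0)]| =
          #|[set a : F | (x *m c) 0 0 + a * (x *m c0) 0 0 == 0]|.
  by apply: eq_card => a; rewrite !inE mem_kerv_pencil.
by rewrite (mem_kerv x c0) (mem_kerv x c) card_affine_roots card_Fp.
Qed.

Lemma card_gt_of_sections_gt (T : {set 'rV[F]_d}) (L : {set 'cV[F]_d}) (k : nat) :
  (0 < d)%N -> (#|L| < p ^ d.-1)%N ->
  (forall c, c \in L -> {subset T <= kerv c}) ->
  (forall c, c \notin L -> (k < #|sect T c|)%N) ->
  (p * k < #|T|)%N.
Proof.
move=> d_gt0 L_small T_sub sect_gt.
have := sum_card_sections T; rewrite (bigID (mem L)) /=.
have -> : (\sum_(c in L) #|sect T c| = #|L| * #|T|)%N.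
  rewrite -sum_nat_const; apply: eq_bigr => c cL; apply: eq_card => x.
  by rewrite inE (andb_idr (T_sub c cL x)).
have : (#|~: L| * k.+1 <= \sum_(c | c \notin L) #|sect T c|)%N.
  rewrite -sum_nat_const (eq_bigl (fun c => c \notin L)) => [|c]; last by rewrite inE.
  by apply: leq_sum => c; apply: sect_gt.
have pd : (p ^ d = p * p ^ d.-1)%N by rewrite -expnS prednK.
have notL_card : #|~: L| = (p * p ^ d.-1 - #|L|)%N.
  by have := cardsC L; rewrite card_mx card_Fp // muln1 pd => <-; rewrite addKn.
rewrite notL_card (cardsD1 0 T) pd => notL_sum count.
apply: (ltn_of_double_count (prime_gt1 p_pr) L_small (leq_b1 _)).
by rewrite -count leq_add2l.
Qed.

End Hyperplanes.

Section LowerBound.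

Variables (p e n : nat) (S : {set 'rV['F_p]_e.+3}).
Hypothesis p_pr : prime p.
Local Notation F := 'F_p.
Hypothesis sect_ge : forall c : 'cV[F]_e.+3, c != 0 -> (n * p ^ e.+1 <= #|sect S c|)%N.

Lemma card_ge_of_sections_gt :
  (forall c : 'cV[F]_e.+3, c != 0 -> (n * p ^ e.+1 < #|sect S c|)%N) ->
  (n * p ^ e.+2 <= #|S|)%N.
Proof.
move=> sect_gt; rewrite expnS mulnCA ltnW //.
apply: (card_gt_of_sections_gt p_pr (L := [set 0])) => // [|c|c].
- by rewrite cards1 -[1%N](expn0 p) ltn_exp2l ?prime_gt1.
- by rewrite inE => /eqP-> x _; rewrite mem_kerv mulmx0 mxE.
- by rewrite inE; apply: sect_gt.
Qed.

Lemma card_ge_of_section_le (c0 : 'cV[F]_e.+3) :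
  c0 != 0 -> (#|sect S c0| <= n * p ^ e.+1)%N -> (n * p ^ e.+2 <= #|S|)%N.
Proof.
move=> c0_neq0 sect_le; set T := sect S c0; set L := [set a *: c0 | a : F].
case: (boolP [exists c, (c \notin L) && (#|sect T c| <= n * p ^ e)%N]).
  case/existsP => c /andP[cL small].
  have pencil_ge : (p * (n * p ^ e.+1) <= \sum_(a : F) #|sect S (c + a *: c0)|)%N.
    rewrite -{1}(card_Fp p_pr) -sum_nat_const; apply: leq_sum => a _; apply: sect_ge.
    apply: contra cL; rewrite addr_eq0 => /eqP->; apply/imsetP.
    by exists (- a); rewrite ?scaleNr.
  move: (card_pencil p_pr S c0 c) pencil_ge (sect_ge c0_neq0) (leq_mul (leqnn p) small).
  by rewrite -/T !expnS; move: (\sum_(a : F) _) => sum; lia.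
move/existsPn => big; exfalso.
suff : (p * (n * p ^ e) < #|T|)%N by rewrite mulnCA -expnS ltnNge sect_le.
apply: (card_gt_of_sections_gt p_pr) => // [|c /imsetP[a _ ->] x|c cL].
- have : (#|L| <= #|F|)%N := leq_imset_card _ _.
  rewrite card_Fp // => /leq_ltn_trans; apply.
  by rewrite -[X in (X < _)%N]expn1 ltn_exp2l // prime_gt1.
- rewrite inE => /andP[_]; rewrite !mem_kerv => /eqP xc0.
  by rewrite -(scalemxAr a x c0) mxE xc0 mulr0.
- by have := big c; rewrite cL /= -ltnNge.
Qed.

Lemma card_ge_of_sections_ge : (n * p ^ e.+2 <= #|S|)%N.
Proof.
case: (boolP [exists c0, (c0 != 0) && (#|sect S c0| <= n * p ^ e.+1)%N]).
  by case/existsP => c0 /andP[]; apply: card_ge_of_section_le.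
move/existsPn => big; apply: card_ge_of_sections_gt => c c_neq0.
by have := big c; rewrite c_neq0 /= -ltnNge.
Qed.

End LowerBound.

Theorem mainTheorem8 (p : nat) (m : int) (d : nat) (S : {set 'rV['F_p]_d}) :
  prime p -> (3 <= d)%N ->
  (forall H : {vspace 'rV['F_p]_d}, \dim H = d.-1 ->
     m * ((p ^ (d - 2))%N)%:Z <= (#|[set x in S | x \in H]|)%:Z) ->
  m * ((p ^ (d - 1))%N)%:Z <= (#|S|)%:Z.
Proof.
move=> p_pr d_ge3 hyp; case: m hyp => [n|n] hyp; last first.
  by apply: le_trans (_ : _ <= 0) _; rewrite // NegzE mulNr oppr_le0.
have [e def_d] : exists e, d = e.+3 by exists (d - 3)%N; rewrite -addn3 subnK.
subst d; rewrite -PoszM lez_nat subn1 /=.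
apply: (card_ge_of_sections_ge p_pr) => c c_neq0.
by have := hyp _ (dim_kerv c_neq0); rewrite -PoszM lez_nat.
Qed.
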